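(* Let $(\mathfrak{h},[\cdot,\cdot])$ be a finite-dimensional real left Leibniz algebra and let $x\stackrel{c}{\rhd}y=\exp(\mathrm{ad}_x)(y)$ be its canonical linear Lie rack operation. Then \[x\stackrel{c}{\rhd}y=\sum_{n=0}^\infty A^0_{n,1}(x,\ldots,x,y),\] where $A^0_{0,1}(x,y)=y$ and, for $n\ge1$, \[A^0_{n,1}(x_1,\ldots,x_n,y)=\frac{1}{(n!)^2}\sum_{\sigma\in S_n}\mathrm{ad}_{x_{\sigma(1)}}\circ\cdots\circ\mathrm{ad}_{x_{\sigma(n)}}(y),\] $S_n$ being the symmetric group on $\{1,\ldots,n\}$. Furthermore, writing $A^0_{n,1}(x,y)=A^0_{n,1}(x,\ldots,x,y)$, for all integers $p,q\ge1$ and all $x,y,z\in\mathfrak{h}$, \[A^0_{p,1}(x,A^0_{q,1}(y,z))=\sum_{s_1+\cdots+s_q+k=p}A^0_{q,1}\big(A^0_{s_1,1}(x,y),\ldots,A^0_{s_q,1}(x,y),A^0_{k,1}(x,z)\big),\] the sum over all tuples of nonnegative integers $(s_1,\ldots,s_q,k)$ summing to $p$.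
   Context: A left Leibniz algebra is a vector space with bilinear bracket satisfying $[u,[v,w]]=[[u,v],w]+[v,[u,w]]$; $\mathrm{ad}_x(y)=[x,y]$. *)

From HB Require Import structures.
From mathcomp Require Import all_boot all_order all_algebra all_fingroup.
From mathcomp Require Import all_classical all_reals all_analysis.
Set Implicit Arguments. Unset Strict Implicit. Unset Printing Implicit Defensive.
Import Order.TTheory GRing.Theory Num.Theory.
Import numFieldNormedType.Exports.
Local Open Scope classical_set_scope.
Local Open Scope ring_scope.

(* The finite-dimensional real vector space h is modelled as 'rV[R]_d,
   with R : realType and an arbitrary bracket br. *)
Section Defs.
Variables (R : realType) (d : nat).
Notation V := 'rV[R]_d.
Variable br : V -> V -> V.

Definition bilinear_bracket : Prop :=
  (forall (a : R) (u v w : V), br (a *: u + v) w = a *: br u w + br v w) /\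
  (forall (a : R) (u v w : V), br w (a *: u + v) = a *: br w u + br w v).

Definition left_leibniz : Prop :=
  forall u v w : V, br u (br v w) = br (br u v) w + br v (br u w).

Definition ad (x : V) : V -> V := br x.

Definition ad_comp (l : seq V) (y : V) : V := foldr (fun x acc => ad x acc) y l.

Definition expad (x y : V) : V :=
  lim (series (fun k : nat => (k`!%:R)^-1 *: iter k (ad x) y) @ \oo).

Definition A0 (n : nat) (xs : 'I_n -> V) (y : V) : V :=
  if n is 0 then y else
  ((n`!%:R ^+ 2)^-1 : R) *:
    \sum_(s : 'S_n) ad_comp [seq xs (s i) | i <- enum 'I_n] y.

Definition A0d (n : nat) (x y : V) : V := A0 (fun _ : 'I_n => x) y.

End Defs.

From HB Require Import structures.
From mathcomp Require Import all_boot all_order all_algebra all_fingroup.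
From mathcomp Require Import all_classical all_reals all_analysis.
From mathcomp Require Import zify.
Import Order.TTheory GRing.Theory Num.Theory.
Import numFieldNormedType.Exports.
Local Open Scope classical_set_scope.
Local Open Scope ring_scope.

Set Implicit Arguments.
Unset Strict Implicit.
Unset Printing Implicit Defensive.

(* Since all n! terms of the symmetrization coincide, A^0_{n,1}(x,...,x,y) is
   ad_x^n(y)/n!, so the first claim is the exponential series of the bounded
   operator ad_x.
   The left Leibniz identity says that ad_x is a derivation of the bracket,
   hence its divided powers D^[n] = ad_x^n/n! satisfy
   D^[n][a,b] = sum_(i+j=n) [D^[i]a, D^[j]b].  Applied to the nested bracket
   ad_y^q(z) = [y,[y,...,[y,z]]], this distributes D^[p] over all compositions
   s_1+...+s_q+k = p.  The symmetrization over S_q in A^0_{q,1} only permutes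
   these compositions, so its q! terms coincide and cancel one of the two
   factors 1/q!. *)

Lemma scaleVsqr_mulrn (R : numFieldType) (V : lmodType R) n (v : V) :
  (n%:R ^+ 2)^-1 *: (v *+ n) = (n%:R)^-1 *: v.
Proof.
have [->|n_neq0] := eqVneq n 0%N; first by rewrite mulr0n scaler0 invr0 scale0r.
rewrite -[v *+ n]scaler_nat scalerA expr2 invfM -mulrA mulVf ?mulr1 //.
by rewrite pnatr_eq0.
Qed.

Section DividedPower.
Variables (R : numFieldType) (V : lmodType R) (D : V -> V).
Hypothesis DZ : forall a v, D (a *: v) = a *: D v.

Definition dpow n v : V := (n`!%:R)^-1 *: iter n D v.

Lemma dpow0 v : dpow 0 v = v.
Proof. by rewrite /dpow invr1 scale1r. Qed.

Lemma dpowZ n a v : dpow n (a *: v) = a *: dpow n v.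
Proof.
rewrite /dpow scalerA mulrC -scalerA; congr (_ *: _).
by elim: n => //= n ->; rewrite DZ.
Qed.

Lemma D_dpow n v : D (dpow n v) = n.+1%:R *: dpow n.+1 v.
Proof.
by rewrite /dpow DZ scalerA factS natrM invfM mulrA mulfV ?mul1r ?pnatr_eq0.
Qed.

End DividedPower.

Section FinfunBig.
Variables (R : Type) (idx : R) (op : Monoid.com_law idx) (T : finType).

Definition ffun_cons q (a : T) (s : {ffun 'I_q -> T}) : {ffun 'I_q.+1 -> T} :=
  [ffun i => if unlift ord0 i is Some j then s j else a].

Lemma ffun_cons0 q a (s : {ffun 'I_q -> T}) : ffun_cons a s ord0 = a.
Proof. by rewrite ffunE unlift_none. Qed.

Lemma ffun_cons_lift q a (s : {ffun 'I_q -> T}) j : ffun_cons a s (lift ord0 j) = s j.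
Proof. by rewrite ffunE liftK. Qed.

Lemma big_ffun_ord_recl q (F : {ffun 'I_q.+1 -> T} -> R) :
  \big[op/idx]_(f : {ffun 'I_q.+1 -> T}) F f =
  \big[op/idx]_(a : T) \big[op/idx]_(s : {ffun 'I_q -> T}) F (ffun_cons a s).
Proof.
rewrite pair_big (reindex (fun p : T * {ffun 'I_q -> T} => ffun_cons p.1 p.2)) //=.
exists (fun f => (f ord0, [ffun j => f (lift ord0 j)])) => [[a s] _ | f _] /=.
  by rewrite ffun_cons0; congr pair; apply/ffunP => j; rewrite ffunE ffun_cons_lift.
by apply/ffunP => i; rewrite ffunE; case: unliftP => [j ->|->]; rewrite ?ffunE.
Qed.

Lemma big_ffun_perm q (σ : 'S_q) (F : {ffun 'I_q -> T} -> R) :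
  \big[op/idx]_(s : {ffun 'I_q -> T}) F [ffun i => s (σ i)] =
  \big[op/idx]_(s : {ffun 'I_q -> T}) F s.
Proof.
apply/esym/reindex_inj => s t /ffunP st; apply/ffunP => i.
by have := st ((σ^-1)%g i); rewrite !ffunE permKV.
Qed.

Lemma big_ffun_cons q a (s : {ffun 'I_q -> T}) (F : T -> R) :
  \big[op/idx]_(i < q.+1) F (ffun_cons a s i) = op (F a) (\big[op/idx]_(i < q) F (s i)).
Proof.
by rewrite big_ord_recl ffun_cons0; under eq_bigr do rewrite ffun_cons_lift.
Qed.

End FinfunBig.

Section LeibnizRule.
Variables (R : numFieldType) (V : lmodType R) (br : V -> V -> V) (D : V -> V).
Hypotheses (brDr : forall u, {morph br u : v w / v + w})
  (brZr : forall u a v, br u (a *: v) = a *: br u v)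
  (brZl : forall u a v, br (a *: u) v = a *: br u v).
Hypotheses (DD : {morph D : u v / u + v}) (DZ : forall a v, D (a *: v) = a *: D v)
  (D_br : forall a b, D (br a b) = br (D a) b + br a (D b)).

Lemma br_sumr u I (r : seq I) (P : pred I) (F : I -> V) :
  br u (\sum_(i <- r | P i) F i) = \sum_(i <- r | P i) br u (F i).
Proof. by apply: (big_morph _ (brDr u)); have := brZr u 0 0; rewrite !scale0r. Qed.

Lemma dpow_br n a b :
  dpow D n (br a b) = \sum_(i < n.+1) br (dpow D i a) (dpow D (n - i) b).
Proof.
elim: n => [|n IH]; first by rewrite big_ord1 !dpow0.
have D0 : D 0 = 0 by have := DZ 0 0; rewrite !scale0r.
have n1_neq0 : (n.+1%:R : R) != 0 by rewrite pnatr_eq0.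
apply: (scalerI n1_neq0); rewrite -(D_dpow DZ) IH (big_morph D DD D0) scaler_sumr.
pose T i := br (dpow D i a) (dpow D (n.+1 - i) b).
transitivity (\sum_(i < n.+2) i%:R *: T i + \sum_(i < n.+2) (n.+1 - i)%:R *: T i).
  rewrite [X in _ = X + _]big_ord_recl [X in _ = _ + X]big_ord_recr /=.
  rewrite scale0r add0r subnn scale0r addr0 -big_split.
  apply: eq_bigr => i _; rewrite D_br !(D_dpow DZ) brZl brZr /T /bump /= add1n subSS.
  by rewrite subSn // -ltnS.
rewrite -big_split; apply: eq_bigr => i _ /=.
by rewrite -(scalerDl (T i)) -natrD subnKC // -ltnS.
Qed.

(* The parts are bounded by an arbitrary N >= p so that the induction on q can
   use the same index type for p - j. *)
Lemma dpow_foldr_br q (a : 'I_q -> V) z p N : (p <= N)%N ->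
  dpow D p (foldr br z [seq a i | i <- enum 'I_q]) =
  \sum_(s : {ffun 'I_q -> 'I_N.+1})
     \sum_(k < N.+1 | (\sum_(i < q) s i + k == p)%N)
       foldr br (dpow D k z) [seq dpow D (s i) (a i) | i <- enum 'I_q].
Proof.
elim: q a p => [|q IH] a p le_pN.
  have lt_pN : (p < N.+1)%N by [].
  rewrite enum_ord0 /= (eq_bigr (fun=> dpow D p z)) => [|s _].
    by rewrite big_const card_ffun !card_ord expn0 /= addr0.
  by rewrite (big_pred1 (Ordinal lt_pN)) // => k; rewrite big_ord0.
rewrite [in LHS]enum_ordSl /= -map_comp dpow_br; set t := foldr br z _.
rewrite (big_ord_widen N.+1 (fun j => br (dpow D j (a ord0)) (dpow D (p - j)%N t))
  (le_pN : p < N.+1)%N).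
rewrite big_ffun_ord_recl big_mkcond; apply: eq_bigr => j _ /=.
case: ifP => [le_jp | gt_jp].
  rewrite /t (IH _ (p - j)%N) ?(leq_trans (leq_subr j p)) // br_sumr.
  apply: eq_bigr => s _; rewrite br_sumr; apply: eq_big => [k | k _].
    by rewrite big_ffun_cons /=; apply/eqP/eqP; lia.
  rewrite enum_ordSl /= ffun_cons0 -map_comp; congr (br _ (foldr _ _ _)).
  by apply: eq_map => i /=; rewrite ffun_cons_lift.
rewrite big1 // => s _; rewrite big_pred0 // => k.
by rewrite big_ffun_cons /=; apply/negbTE/eqP; move: gt_jp; lia.
Qed.

End LeibnizRule.

Lemma cvg_series_dpow (R : realType) (V : completeNormedModType R) (T : V -> V)
    (C : R) : 0 <= C -> (forall v, `|T v| <= C * `|v|) ->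
  forall v, cvgn (series (fun n => dpow T n v)).
Proof.
move=> C_ge0 TC v.
have iterC n : `|iter n T v| <= C ^+ n * `|v|.
  elim: n => [|n IH] /=; first by rewrite expr0 mul1r.
  by rewrite (le_trans (TC _)) // exprS -mulrA ler_wpM2l.
apply: normed_cvg; apply: (@series_le_cvg _ _ (`|v| *: exp_coeff C)) => n /=.
- exact: normr_ge0.
- by rewrite mulr_ge0 // exp_coeff_ge0.
- rewrite /dpow normrZ ger0_norm ?invr_ge0 // exp_coeffE /=.
  apply: le_trans (ler_wpM2l _ (iterC n)) _; first by rewrite invr_ge0.
  by rewrite fctE mulrA mulrC.
exact/is_cvg_seriesZ/is_cvg_series_exp_coeff.
Qed.

Lemma normr_mx_entry_le (R : realFieldType) m n (A : 'M[R]_(m, n)) i j :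
  `|A i j| <= `|A|.
Proof.
rewrite [X in _ <= X]mx_normrE.
exact: (le_bigmax _ (fun ij : 'I_m * 'I_n => `|A ij.1 ij.2|) (i, j)).
Qed.

Lemma rV_linear_bounded (R : realFieldType) d (W : normedModType R)
    (f : 'rV[R]_d -> W) :
  {morph f : u v / u + v} -> (forall a v, f (a *: v) = a *: f v) ->
  exists2 C : R, 0 <= C & forall v, `|f v| <= C * `|v|.
Proof.
move=> fD fZ; exists (\sum_(j < d) `|f (delta_mx 0 j)|) => [|v].
  exact: sumr_ge0.
have f0 : f 0 = 0 by have := fZ 0 0; rewrite !scale0r.
rewrite {1}(row_sum_delta v) (big_morph f fD f0) mulr_suml.
rewrite (le_trans (ler_norm_sum _ _ _)) // ler_sum // => j _.
by rewrite fZ normrZ mulrC ler_wpM2l ?normr_mx_entry_le.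
Qed.

Section Symmetrization.
Variables (R : realType) (d : nat) (br : 'rV[R]_d -> 'rV[R]_d -> 'rV[R]_d).
Local Notation V := 'rV[R]_d.

Lemma A0E n (xs : 'I_n -> V) y :
  A0 br xs y = (n`!%:R ^+ 2)^-1 *:
    \sum_(σ : 'S_n) ad_comp br [seq xs (σ i) | i <- enum 'I_n] y.
Proof.
case: n xs => [|n] xs //.
by rewrite enum_ord0 sumr_const card_Sn /= expr1n invr1 scale1r.
Qed.

Lemma A0dE : A0d br = fun n x => dpow (br x) n.
Proof.
apply/funext => n; apply/funext => x; apply/funext => y.
have ad_const (l : seq 'I_n) : ad_comp br [seq x | _ <- l] y = iter (size l) (br x) y.
  by elim: l => //= _ l ->.
rewrite /A0d A0E; under eq_bigr do rewrite ad_const size_enum_ord.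
by rewrite sumr_const card_Sn scaleVsqr_mulrn.
Qed.

Lemma sum_A0_perm_invariant (T I : finType) q (g : T -> V) (h : I -> V)
    (P : {ffun 'I_q -> T} -> pred I) :
  (forall (σ : 'S_q) (s : {ffun 'I_q -> T}), P [ffun i => s (σ i)] =1 P s) ->
  \sum_(s : {ffun 'I_q -> T}) \sum_(k | P s k) A0 br (fun i => g (s i)) (h k) =
  (q`!%:R)^-1 *: \sum_(s : {ffun 'I_q -> T}) \sum_(k | P s k)
                   ad_comp br [seq g (s i) | i <- enum 'I_q] (h k).
Proof.
move=> P_perm; under eq_bigr do under eq_bigr do rewrite A0E.
pose Y (σ : 'S_q) := \sum_(s : {ffun 'I_q -> T}) \sum_(k | P s k)
                       ad_comp br [seq g (s (σ i)) | i <- enum 'I_q] (h k).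
transitivity ((q`!%:R ^+ 2)^-1 *: \sum_(σ : 'S_q) Y σ).
  under eq_bigr do rewrite -scaler_sumr exchange_big /=.
  by rewrite -scaler_sumr exchange_big.
have Y_const σ : Y σ = Y 1%g.
  rewrite /Y -[RHS](big_ffun_perm _ σ); apply: eq_bigr => s _.
  apply: eq_big => [k | k _]; first by rewrite P_perm.
  by congr ad_comp; apply: eq_map => i; rewrite ffunE perm1.
rewrite (eq_bigr _ (fun σ _ => Y_const σ)) sumr_const card_Sn scaleVsqr_mulrn.
congr (_ *: _); apply: eq_bigr => s _; apply: eq_bigr => k _.
by under eq_map do rewrite perm1.
Qed.

End Symmetrization.

(* Row vectors are complete, but the join with their normed-module structure
   (a completeNormedModType, needed by normed_cvg) is not declared. *)
HB.instance Definition _ (R : realType) d := Complete.on 'M[R]_(1, d).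

Section LeibnizAlgebra.
Variables (R : realType) (d : nat) (br : 'rV[R]_d -> 'rV[R]_d -> 'rV[R]_d).
Hypotheses (br_bilinear : bilinear_bracket br) (br_leibniz : left_leibniz br).

Lemma bracket0r u : br u 0 = 0.
Proof.
have /eqP := (proj2 br_bilinear) 1 0 0 u; rewrite !scale1r addr0 eq_sym.
by rewrite -subr_eq0 addrK => /eqP.
Qed.

Lemma bracket0l u : br 0 u = 0.
Proof.
have /eqP := (proj1 br_bilinear) 1 0 0 u; rewrite !scale1r addr0 eq_sym.
by rewrite -subr_eq0 addrK => /eqP.
Qed.

Lemma bracketDr u : {morph br u : v w / v + w}.
Proof. by move=> v w; have := (proj2 br_bilinear) 1 v w u; rewrite !scale1r. Qed.

Lemma bracketZr u a v : br u (a *: v) = a *: br u v.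
Proof. by have := (proj2 br_bilinear) a v 0 u; rewrite !addr0 bracket0r addr0. Qed.

Lemma bracketZl u a v : br (a *: u) v = a *: br u v.
Proof. by have := (proj1 br_bilinear) a u 0 v; rewrite !addr0 bracket0l addr0. Qed.

Lemma A0d_A0dE p q x y z :
  A0d br p x (A0d br q y z) =
  \sum_(s : {ffun 'I_q -> 'I_p.+1})
    \sum_(k < p.+1 | (\sum_(i < q) s i + k == p)%N)
      A0 br (fun i : 'I_q => A0d br (s i) x y) (A0d br k x z).
Proof.
rewrite A0dE /=.
rewrite (sum_A0_perm_invariant br (fun j : 'I_p.+1 => dpow (br x) j y)); last first.
  move=> σ s k; under eq_bigr do rewrite ffunE.
  by rewrite [in RHS](reindex_perm σ).
rewrite {2}/dpow (dpowZ (bracketZr x)); congr (_ *: _).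
have foldr_const (l : seq 'I_q) : foldr br z [seq y | _ <- l] = iter (size l) (br y) z.
  by elim: l => //= _ l ->.
rewrite -[q in iter q](size_enum_ord q) -foldr_const.
exact: (dpow_foldr_br bracketDr bracketZr bracketZl (bracketDr x) (bracketZr x)
          (br_leibniz x)).
Qed.

End LeibnizAlgebra.

Theorem corollary2 (R : realType) (d : nat) (br : 'rV[R]_d -> 'rV[R]_d -> 'rV[R]_d) :
  bilinear_bracket br -> left_leibniz br ->
  (forall x y : 'rV[R]_d,
      series (fun n : nat => A0d br n x y) @ \oo --> expad br x y) /\
  (forall (p q : nat) (x y z : 'rV[R]_d), (1 <= p)%N -> (1 <= q)%N ->
      A0d br p x (A0d br q y z) =
      \sum_(s : {ffun 'I_q -> 'I_p.+1})
        \sum_(k < p.+1 | (\sum_(i < q) (s i : nat) + k == p)%N)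
          A0 br (fun i : 'I_q => A0d br (s i) x y) (A0d br k x z)).
Proof.
(* The composition law holds without the bounds 1 <= p and 1 <= q. *)
move=> br_bilinear br_leibniz; split=> [x y | p q x y z _ _].
  have [C C_ge0 brC] := rV_linear_bounded (bracketDr br_bilinear x)
                                          (bracketZr br_bilinear x).
  by rewrite A0dE; exact: cvg_series_dpow C_ge0 brC y.
exact: A0d_A0dE.
Qed.
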